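(* Let $\mathbf{G}$ be an $n\times n$ real positive definite matrix that admits a decomposition $\mathbf{G}=\mathbf{D}-\mathbf{V}\mathbf{V}^T$, where $\mathbf{D}$ is an $n\times n$ diagonal matrix and $\mathbf{V}$ is an $n\times k$ real matrix with linearly independent columns. Let $\mathbf{a}^*$ be any minimizer of $f(\mathbf{a})=\mathbf{a}^T\mathbf{G}\mathbf{a}$ over $\mathbf{a}\in\mathbb{Z}^n\setminus\{\mathbf{0}\}$. Then: (a) either $\mathbf{a}^*=\pm\mathbf{u}_i$ for some $i$, or there exists $\mathbf{x}\in\mathbb{R}^k$ such that, elementwise, $$\mathbf{a}^*-\tfrac12\mathbf{1}<\mathbf{D}^{-1}\mathbf{V}\mathbf{x}<\mathbf{a}^*+\tfrac12\mathbf{1},$$ and hence $\mathbf{a}^*=\lfloor\mathbf{D}^{-1}\mathbf{V}\mathbf{x}\rceil$ (componentwise rounding to the nearest integer); (b) $\|\mathbf{a}^*\|\le\sqrt{G_{\min}/\lambda_{\min}}$, where $G_{\min}$ is the smallest diagonal entry of $\mathbf{G}$ and $\lambda_{\min}$ the smallest eigenvalue of $\mathbf{G}$.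
   Context: Such a decomposition is called a $DP^k$ decomposition ($\mathbf{P}=\mathbf{V}\mathbf{V}^T$ is positive semidefinite of rank $k$); since $\mathbf{G}$ is positive definite and $\mathbf{P}$ positive semidefinite, all diagonal entries of $\mathbf{D}$ are strictly positive, so $\mathbf{D}^{-1}$ exists. $\mathbf{1}$ is the all-ones vector, $\mathbf{u}_i$ the $i$-th standard unit vector of $\mathbb{R}^n$, $\|\cdot\|$ the Euclidean norm; vector inequalities are elementwise. *)

(* Real numbers are modelled by an arbitrary real closed field R. *)
From HB Require Import structures.
From mathcomp Require Export all_boot all_order all_algebra.
Set Implicit Arguments. Unset Strict Implicit. Unset Printing Implicit Defensive.
Import Order.TTheory GRing.Theory Num.Theory.
Local Open Scope ring_scope.

Definition intvec (R : rcfType) (n : nat) (a : 'cV[int]_n) : 'cV[R]_n :=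
  map_mx (fun z : int => z%:~R) a.

Definition qform (R : rcfType) (n : nat) (G : 'M[R]_n) (x : 'cV[R]_n) : R :=
  (x^T *m G *m x) 0 0.

Definition posdef (R : rcfType) (n : nat) (G : 'M[R]_n) : Prop :=
  G^T = G /\ forall x : 'cV[R]_n, x != 0 -> 0 < qform G x.

Definition int_minimizer (R : rcfType) (n : nat) (G : 'M[R]_n) (a : 'cV[int]_n) : Prop :=
  a != 0 /\ forall b : 'cV[int]_n, b != 0 -> qform G (intvec R a) <= qform G (intvec R b).

Definition enorm (R : rcfType) (n : nat) (x : 'cV[R]_n) : R :=
  Num.sqrt (\sum_(i < n) x i 0 ^+ 2).

(* Comparing a with its neighbours a + u_i and a - u_i gives |2 (G a)_i| <= G_ii.
   Writing G = D - V V^T and x = V^T a, this reads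
   |D_ii a_i - (V x)_i| <= (D_ii - |V_i|^2) / 2, i.e. a_i lies within 1/2 of
   (D^-1 V x)_i, strictly unless row V_i vanishes, in which case a_i = 0.
   For the norm bound, lambda_min |a|^2 <= a^T G a <= u_i^T G u_i = G_ii, the
   first inequality by diagonalising the symmetric matrix G as a hermitian
   complex matrix. *)

From HB Require Import structures.
From mathcomp Require Import all_boot all_order all_algebra.
From mathcomp Require Import complex ring lra.
Set Implicit Arguments. Unset Strict Implicit. Unset Printing Implicit Defensive.
Import Order.TTheory GRing.Theory Num.Theory.
Local Open Scope ring_scope.

Lemma eigenvalue_map (F K : fieldType) (f : {rmorphism F -> K}) n
    (A : 'M[F]_n) (a : F) :
  eigenvalue (map_mx f A) (f a) = eigenvalue A a.
Proof. by rewrite !eigenvalue_root_char -map_char_poly fmorph_root. Qed.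

Section Spectral.
Variable C : numClosedFieldType.
Local Open Scope sesquilinear_scope.

Lemma spectral_diag_eigenvalue n (A : 'M[C]_n) j :
  A \is normalmx -> eigenvalue A (spectral_diag A 0 j).
Proof.
move=> /orthomx_spectralP AE; set P := spectralmx A in AE.
have Punit : P \in unitmx := spectral_unit A.
apply/eigenvalueP; exists (delta_mx 0 j *m P).
  rewrite {1}AE !mulmxA mulmxK // scalemxAl; congr (_ *m _).
  apply/matrixP => a b; rewrite mul_mx_diag !mxE ord1 eqxx /=.
  by case: (b =P j) => [->|_]; rewrite ?mulr1 ?mul1r ?mul0r ?mulr0.
rewrite mulmx_free_eq0 ?row_free_unit //.
by apply/eqP => /matrixP/(_ 0 j); rewrite !mxE !eqxx => /eqP; rewrite oner_eq0.
Qed.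

Lemma normalmx_rayleigh n (A : 'M[C]_n) (l : C) (x : 'cV[C]_n) :
  A \is normalmx -> (forall j, l <= spectral_diag A 0 j) ->
  l * (x^t* *m x) 0 0 <= (x^t* *m A *m x) 0 0.
Proof.
move=> /orthomx_spectralP AE dge.
set P := spectralmx A in AE; set d := spectral_diag A in AE dge.
have Pu : P \is unitarymx := spectral_unitarymx A.
pose y := P *m x.
have xPE : x^t* *m P^t* = y^t* by rewrite /y trmx_mul map_mxM.
have xAxE : (x^t* *m A *m x) 0 0 = \sum_j (y j 0)^* * d 0 j * y j 0.
  rewrite AE invmx_unitary // !mulmxA xPE -mulmxA mxE.
  by apply: eq_bigr => j _; rewrite mul_mx_diag !mxE.
have xxE : (x^t* *m x) 0 0 = \sum_j (y j 0)^* * y j 0.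
  rewrite -{1}(mulmxKtV (x^t*) Pu) // xPE -mulmxA mxE.
  by apply: eq_bigr => j _; rewrite !mxE.
rewrite xAxE xxE mulr_sumr; apply: ler_sum => j _.
rewrite mulrC -mulrA [d 0 j * _]mulrC mulrA.
by apply: ler_wpM2l (dge j); rewrite mulrC mul_conjC_ge0.
Qed.

End Spectral.

Section RealRayleigh.
Variable R : rcfType.
Local Notation toC := (real_complex R).

Lemma real_complex_real (r : R) : toC r \is Num.real.
Proof. by have := complexRe (r%:C)%C => /= ->; exact: Creal_Re. Qed.

Lemma map_real_complex_conj m n (M : 'M[R]_(m, n)) :
  map_mx Num.conj (map_mx toC M) = map_mx toC M.
Proof. by apply/matrixP => i j; rewrite !mxE conj_Creal ?real_complex_real. Qed.

Lemma rayleigh_lower_bound n (G : 'M[R]_n) (l : R) (x : 'cV[R]_n) :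
  G^T = G -> (forall mu, eigenvalue G mu -> l <= mu) ->
  l * (x^T *m x) 0 0 <= qform G x.
Proof.
move=> Gsym lmin; pose A := map_mx toC G.
have Aherm : A \is hermsymmx.
  apply: realsym_hermsym; last by apply/mxOverP => i j; rewrite mxE real_complex_real.
  by apply/is_hermitianmxP; rewrite expr0 scale1r map_mx_id // /A map_trmx Gsym.
have dge j : toC l <= spectral_diag A 0 j.
  have dE : spectral_diag A 0 j = toC (complex.Re (spectral_diag A 0 j)).
    rewrite complexRe; apply/esym/Creal_ReP.
    exact: (mxOverP (hermitian_spectral_diag_real Aherm)).
  have := spectral_diag_eigenvalue j (hermitian_normalmx Aherm).
  by rewrite dE eigenvalue_map lecR => /lmin.
have := normalmx_rayleigh (map_mx toC x) (hermitian_normalmx Aherm) dge.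
rewrite -map_trmx map_real_complex_conj => rayleighC.
have toC11 (M : 'M[R]_1) : toC (M 0 0) = map_mx toC M 0 0 by rewrite mxE.
by rewrite -lecR rmorphM /= /qform !toC11 !map_mxM -map_trmx.
Qed.

End RealRayleigh.

Lemma delta_mx_neq0 (F : nzSemiRingType) m n (i : 'I_m) (j : 'I_n) :
  delta_mx i j != 0 :> 'M[F]_(m, n).
Proof.
by apply/eqP => /matrixP/(_ i j); rewrite !mxE !eqxx => /eqP; rewrite oner_eq0.
Qed.

Lemma diag_mulmx_entry (F : pzSemiRingType) n p (D : 'M[F]_n) (z : 'M[F]_(n, p)) i j :
  is_diag_mx D -> (D *m z) i j = D i i * z i j.
Proof. by move=> /diag_mxP [d ->]; rewrite mul_diag_mx !mxE eqxx mulr1n. Qed.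

Lemma diag_unitmx (F : fieldType) n (D : 'M[F]_n) :
  is_diag_mx D -> (forall i, D i i != 0) -> D \in unitmx.
Proof.
move=> /diag_mxP [d ->] Dnz; rewrite unitmxE det_diag unitfE.
by apply/prodf_neq0 => i _; have := Dnz i; rewrite mxE eqxx mulr1n.
Qed.

Lemma invmx_diag_mulmx_entry (F : fieldType) n p (D : 'M[F]_n) (z : 'M[F]_(n, p)) i j :
  is_diag_mx D -> (forall i, D i i != 0) -> (invmx D *m z) i j = z i j / D i i.
Proof.
move=> hD Dnz; have := diag_mulmx_entry (invmx D *m z) i j hD.
by rewrite mulKVmx ?diag_unitmx // => ->; rewrite mulrC mulKf.
Qed.

Lemma row_sqr_sum_eq0_mulmx (F : realDomainType) n k (V : 'M[F]_(n, k)) (y : 'cV[F]_k) i :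
  \sum_j V i j ^+ 2 = 0 -> (V *m y) i 0 = 0.
Proof.
move=> /psumr_eq0P V0; rewrite mxE; apply: big1 => j _.
by have /eqP := V0 (fun j _ => sqr_ge0 _) j isT; rewrite sqrf_eq0 => /eqP ->; rewrite mul0r.
Qed.

Section DiagonalMinusGram.
Variables (F : realFieldType) (n k : nat) (G D : 'M[F]_n) (V : 'M[F]_(n, k)).
Hypotheses (hD : is_diag_mx D) (hdec : G = D - V *m V^T).

Lemma diag_sub_gram_diag i : G i i = D i i - \sum_j V i j ^+ 2.
Proof. by rewrite hdec !mxE; congr (_ - _); apply: eq_bigr => j _; rewrite !mxE expr2. Qed.

Lemma diag_sub_gram_mulmx_entry (u : 'cV[F]_n) i :
  (G *m u) i 0 = D i i * u i 0 - (V *m (V^T *m u)) i 0.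
Proof.
rewrite hdec mulmxBl -mulmxA [LHS]mxE diag_mulmx_entry //.
by congr (_ + _); rewrite mxE.
Qed.

Lemma diag_sub_gram_diag_gt0 i : 0 < G i i -> 0 < D i i.
Proof.
have : 0 <= \sum_j V i j ^+ 2 by apply: sumr_ge0 => j _; exact: sqr_ge0.
by rewrite diag_sub_gram_diag; lra.
Qed.

End DiagonalMinusGram.

(* Instantiated with d = D_ii, r = |V_i|^2 and w = (V V^T a)_i. *)
Lemma nearest_int_window (F : realFieldType) (z : int) (d r w : F) :
  0 < d -> 0 <= r -> (r = 0 -> w = 0) -> `|2 * (d * z%:~R - w)| <= d - r ->
  z%:~R - 2^-1 < w / d /\ w / d < z%:~R + 2^-1.
Proof.
move=> d_gt0 r_ge0 w0 zw_le; have [r_gt0 | r_le0] := ltrP 0 r.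
  move: zw_le; rewrite ler_norml => /andP [lo hi].
  by rewrite ltr_pdivlMr // ltr_pdivrMr //; split; lra.
have r0 : r = 0 by apply/le_anti; rewrite r_le0 r_ge0.
rewrite r0 (w0 r0) subr0 normrM ger0_norm // normrM gtr0_norm // in zw_le.
suff -> : z = 0 by rewrite (w0 r0) mul0r; split; lra.
apply/eqP; apply: contraT => z_neq0.
have : 1 <= `|z%:~R : F| by rewrite -intr_norm ler1z norm_intr_ge1.
by nra.
Qed.

Section QuadraticForm.
Variables (R : rcfType) (n : nat).
Implicit Types (G : 'M[R]_n) (u : 'cV[R]_n) (a b : 'cV[int]_n).

Lemma intvecD a b : intvec R (a + b) = intvec R a + intvec R b.
Proof. by apply/matrixP => i j; rewrite !mxE intrD. Qed.

Lemma intvecN a : intvec R (- a) = - intvec R a.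
Proof. by apply/matrixP => i j; rewrite !mxE intrN. Qed.

Lemma intvec_delta (i : 'I_n) : intvec R (delta_mx i 0) = delta_mx i 0.
Proof. by apply/matrixP => k j; rewrite !mxE; case: (_ && _). Qed.

Lemma qform_delta G i : qform G (delta_mx i 0) = G i i.
Proof. by rewrite /qform trmx_delta -rowE -colE !mxE. Qed.

Lemma qformD_delta G u (s : R) i : G^T = G ->
  qform G (u + s *: delta_mx i 0) =
  qform G u + 2 * s * (G *m u) i 0 + s ^+ 2 * G i i.
Proof.
move=> Gsym; rewrite /qform; set e : 'cV[R]_n := delta_mx i 0.
have uGe : (u^T *m G *m e) 0 0 = (G *m u) i 0.
  transitivity ((u^T *m G *m e)^T 0 0); first by rewrite [RHS]mxE.
  by rewrite !trmx_mul trmxK Gsym trmx_delta -rowE mxE.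
have eGu : (e^T *m G *m u) 0 0 = (G *m u) i 0.
  by rewrite trmx_delta -mulmxA -rowE mxE.
have eGe : (e^T *m G *m e) 0 0 = G i i by exact: qform_delta.
have addE (A B : 'M[R]_1) : (A + B) 0 0 = A 0 0 + B 0 0 by rewrite mxE.
have scaleE (A : 'M[R]_1) c : (c *: A) 0 0 = c * A 0 0 by rewrite mxE.
have -> : (u + s *: e)^T = u^T + s *: e^T by apply/matrixP => a b; rewrite !mxE.
rewrite !mulmxDl !mulmxDr -!scalemxAl -!scalemxAr.
by rewrite !addE !scaleE uGe eGu eGe; ring.
Qed.

End QuadraticForm.

Lemma trmx_mulmx_self_entry (F : pzSemiRingType) n (x : 'cV[F]_n) :
  (x^T *m x) 0 0 = \sum_i x i 0 ^+ 2.
Proof. by rewrite mxE; apply: eq_bigr => i _; rewrite !mxE expr2. Qed.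

Section IntegerMinimizer.
Variables (R : rcfType) (n : nat) (G : 'M[R]_n) (a : 'cV[int]_n).
Hypotheses (hG : posdef G) (ha : int_minimizer G a).

Lemma int_minimizer_coord_le i :
  a + delta_mx i 0 != 0 -> a - delta_mx i 0 != 0 ->
  `|2 * (G *m intvec R a) i 0| <= G i i.
Proof.
have [Gsym _] := hG; have [_ amin] := ha; move=> /amin up /amin down.
rewrite intvecD intvec_delta -[delta_mx i 0]scale1r qformD_delta // in up.
rewrite intvecD intvecN intvec_delta -scaleN1r qformD_delta // in down.
by rewrite ler_norml; apply/andP; split; nra.
Qed.

Lemma int_minimizer_qform_le i : qform G (intvec R a) <= G i i.
Proof.
have [_ amin] := ha.
by rewrite -qform_delta -intvec_delta; apply/amin/delta_mx_neq0.
Qed.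

End IntegerMinimizer.

Lemma posdef_diag_gt0 (R : rcfType) n (G : 'M[R]_n) i : posdef G -> 0 < G i i.
Proof. by move=> hG; rewrite -qform_delta; apply/hG.2/delta_mx_neq0. Qed.

Lemma posdef_eigenvalue_gt0 (R : rcfType) n (G : 'M[R]_n) (l : R) :
  posdef G -> eigenvalue G l -> 0 < l.
Proof.
move=> [_ Gpd] /eigenvalueP [v vG v_neq0].
have vT_neq0 : v^T != 0 by rewrite trmx_eq0.
have : 0 <= (v^T^T *m v^T) 0 0.
  by rewrite trmx_mulmx_self_entry; apply: sumr_ge0 => i _; exact: sqr_ge0.
have := Gpd _ vT_neq0; rewrite /qform trmxK vG -scalemxAl mxE.
by nra.
Qed.

Lemma int_minimizer_enorm_le (R : rcfType) n (G : 'M[R]_n) (a : 'cV[int]_n) i (l : R) :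
  posdef G -> int_minimizer G a ->
  eigenvalue G l -> (forall mu, eigenvalue G mu -> l <= mu) ->
  enorm (intvec R a) <= Num.sqrt (G i i / l).
Proof.
move=> hG ha /(posdef_eigenvalue_gt0 hG) l_gt0 lmin.
rewrite /enorm ler_sqrt; last exact: divr_ge0 (ltW (posdef_diag_gt0 i hG)) (ltW l_gt0).
rewrite ler_pdivlMr // mulrC -trmx_mulmx_self_entry.
apply: le_trans (rayleigh_lower_bound _ hG.1 lmin) _.
exact: int_minimizer_qform_le.
Qed.

Lemma int_minimizer_rounding (R : rcfType) n k (G D : 'M[R]_n) (V : 'M[R]_(n, k))
    (a : 'cV[int]_n) :
  posdef G -> is_diag_mx D -> G = D - V *m V^T -> int_minimizer G a ->
  (forall i, a != delta_mx i 0 /\ a != - delta_mx i 0) ->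
  exists x : 'cV[R]_k, forall i,
    (a i 0)%:~R - 2^-1 < (invmx D *m V *m x) i 0 /\
    (invmx D *m V *m x) i 0 < (a i 0)%:~R + 2^-1.
Proof.
move=> hG hD hdec ha not_unit; exists (V^T *m intvec R a) => i.
have D_gt0 j : 0 < D j j := diag_sub_gram_diag_gt0 hdec (posdef_diag_gt0 j hG).
rewrite -mulmxA invmx_diag_mulmx_entry // => [|j]; last exact/lt0r_neq0/D_gt0.
have [ne_delta ne_ndelta] := not_unit i.
have := int_minimizer_coord_le hG ha (i := i).
rewrite addr_eq0 subr_eq0 ne_delta ne_ndelta (diag_sub_gram_mulmx_entry hD hdec).
rewrite (diag_sub_gram_diag hdec) [intvec R a i 0]mxE => /(_ isT isT) zw_le.
apply: nearest_int_window zw_le => //.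
- by apply: sumr_ge0 => j _; exact: sqr_ge0.
- exact: row_sqr_sum_eq0_mulmx.
Qed.

Theorem theorem2 (R : rcfType) (n k : nat) (G D : 'M[R]_n) (V : 'M[R]_(n, k))
  (hG : posdef G) (hD : is_diag_mx D) (hV : row_free V^T)
  (hdec : G = D - V *m V^T)
  (a : 'cV[int]_n) (ha : int_minimizer G a) :
  ((exists i : 'I_n, a = delta_mx i 0 \/ a = - delta_mx i 0) \/
   (exists x : 'cV[R]_k, forall i : 'I_n,
      (a i 0)%:~R - 2^-1 < (invmx D *m V *m x) i 0 /\
      (invmx D *m V *m x) i 0 < (a i 0)%:~R + 2^-1))
  /\
  (forall (Gmin lmin : R),
     (exists i : 'I_n, Gmin = G i i) -> (forall i : 'I_n, Gmin <= G i i) ->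
     eigenvalue G lmin -> (forall mu : R, eigenvalue G mu -> lmin <= mu) ->
     enorm (intvec R a) <= Num.sqrt (Gmin / lmin)).
Proof.
split; last first.
  by move=> Gmin lmin [i ->] _; exact: int_minimizer_enorm_le.
have [/existsP [i /orP [] /eqP a_unit] | not_unit] :=
  boolP [exists i, (a == delta_mx i 0) || (a == - delta_mx i 0)].
- by left; exists i; left.
- by left; exists i; right.
right; apply: int_minimizer_rounding hG hD hdec ha _ => i.
by split; apply: contra not_unit => /eqP a_unit; apply/existsP; exists i;
  rewrite a_unit eqxx ?orbT.
Qed.
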